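(* For all constants $0<\alpha\le \beta$ there is a constant $c>0$ such that the following holds. Let $k\le n$ be positive integers and let $h$ be an integer with $\alpha\log(n/k+1)\le h\le \beta\log(n/k+1)$ and $2\le h\le k$, and set $\ell=\lfloor k/h\rfloor$. Suppose that in the $\ell$-variant cup game on $n$ cups, some play of $T$ rounds ends with a cup of fill at least $4k$. Then $T\ge c\,h\,\ell^3$ (and hence $T=\Omega(k^3/h^2)$).
   Context: The $\ell$-variant cup game on $n$ cups ($\ell$ a positive integer): there are $n$ cups with integer fills, all initially $0$. In each round the player chooses an integer $k'\ge 0$ and an integer $q\ge1$ such that at least $2q$ cups have fill exactly $k'$ (if none exist the game ends). Among these cups, exactly $q$ are raised to fill $k'+1$; if $k'$ is a multiple of $\ell$ (a checkpoint $a\ell$, $a\ge0$), the other $q$ are left at $k'$, and otherwise $q$ other such cups are lowered to $k'-1$. (Thus a cup that has reached a checkpoint never goes below it.) *)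

From mathcomp Require Import all_boot.
From Stdlib Require Import Reals.

Set Implicit Arguments.
Unset Strict Implicit.
Unset Printing Implicit Defensive.

(* A configuration of the game on n cups: the (integer, in fact
   nonnegative) fill of each cup. Fills never go below 0 since 0 is a
   checkpoint, so nat is faithful. *)
Definition config (n : nat) := 'I_n -> nat.

Definition init_config (n : nat) : config n := fun _ => 0.

(* If k'
   is a checkpoint (multiple of l) the cups of D stay at k', otherwise
   they are lowered to k' - 1.  All other cups are unchanged. *)
Definition cup_round (l n : nat) (s s' : config n) : Prop :=
  exists (k' q : nat) (U D : {set 'I_n}),
    1 <= q /\ #|U| = q /\ #|D| = q /\ [disjoint U & D] /\
        (forall i, i \in U :|: D -> s i = k') /\
        (forall i, s' i =
           if i \in U then k'.+1
           else if i \in D then (if l %| k' then k' else k'.-1)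
           else s i).

Definition cup_play (l n T : nat) (s : nat -> config n) : Prop :=
  s 0 = @init_config n /\ forall t, t < T -> cup_round l (s t) (s t.+1).

From mathcomp Require Import all_boot zify ssralg.
From Stdlib Require Import Reals Lra.
From mathcomp Require Import ssrnat ring.

(* Write N_t(y) for the number of cups of fill at least y after t rounds.  A
   round at level x moving q cups needs 2q cups at x, raises N(x+1) by q and
   lowers N(x) by q unless x is a checkpoint; so checkpoint counts never
   decrease, and above a checkpoint b we get N(b+j) + j <= N(b) whenever
   N(b+j) > 0.  A cup of fill 4hl thus forces m_a := N_T(al) > 2hl for a <= 2h.
   Since n/k + 1 <= K^h for an integer K > e^(1/alpha), fewer than h of the
   ratios m_a / m_(a+1), a < 2h, exceed K.
   In an interval (al, al+l] every round strictly inside raises the weight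
   sum_y (y-al-1) N(y) by its q and lowers sum_y N(y)^2 by at least 2q^2, while
   a round at the floor al adds q to sum_y N(y) and at most 2q m_a to
   sum_y N(y)^2.  Hence the q's of
   the interval sum to at least C(l,2) m_(a+1) and their squares to at most
   l m_a^2; by Cauchy-Schwarz a good interval (m_a <= K m_(a+1)) contains at
   least C(l,2)^2 / (l K^2) rounds.  A round lies inside at most one interval,
   so T >= h C(l,2)^2 / (l K^2), which is of order h l^3 / K^2. *)

Set Implicit Arguments.
Unset Strict Implicit.
Unset Printing Implicit Defensive.

Lemma leq_sum_nat (F G : nat -> nat) m n :
  (forall i, m <= i < n -> F i <= G i) ->
  \sum_(m <= i < n) F i <= \sum_(m <= i < n) G i.
Proof.
move=> FG; rewrite big_seq [leqRHS]big_seq.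
by apply: leq_sum => i; rewrite mem_index_iota; apply: FG.
Qed.

Lemma sum_nat_update (F G : nat -> nat) m n p : m <= p < n ->
  (forall i, m <= i < n -> i != p -> F i = G i) ->
  \sum_(m <= i < n) F i + G p = \sum_(m <= i < n) G i + F p.
Proof.
move=> p_in FG; have uniq_r : uniq (index_iota m n) by apply: iota_uniq.
rewrite !(bigD1_seq p) ?mem_index_iota //=.
have -> : \sum_(i <- index_iota m n | i != p) F i =
          \sum_(i <- index_iota m n | i != p) G i.
  rewrite big_seq_cond [RHS]big_seq_cond; apply: eq_bigr => i /andP[].
  by rewrite mem_index_iota; apply: FG.
lia.
Qed.

Lemma sum_nat_update2 (F G : nat -> nat) m n p p' :
  m <= p < n -> m <= p' < n -> p != p' ->
  (forall i, m <= i < n -> i != p -> i != p' -> F i = G i) ->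
  \sum_(m <= i < n) F i + G p + G p' = \sum_(m <= i < n) G i + F p + F p'.
Proof.
move=> p_in p'_in pp' FG; pose H i := if i == p then G i else F i.
have FH := @sum_nat_update F H m n p p_in.
have HG := @sum_nat_update H G m n p' p'_in.
rewrite /H eqxx eq_sym (negbTE pp') in FH HG.
rewrite FH; last by move=> i _ /negbTE ->.
rewrite -addnA [F p + _]addnC addnA HG; first lia.
by move=> i i_in ip'; case: eqP => // /eqP ip; apply: FG.
Qed.

Lemma sqr_sum_le_support (I : Type) (r : seq I) (F : I -> nat) :
  (\sum_(i <- r) F i) ^ 2 <= (\sum_(i <- r) (0 < F i : nat)) * \sum_(i <- r) F i ^ 2.
Proof.
rewrite -(leq_pmul2l (isT : 0 < 2)) -mulnn big_distrlr [leqRHS]mul2n -addnn.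
rewrite [in X in X + _]mulnC !big_distrlr -big_split big_distrr /=.
apply: leq_sum => i _; rewrite -big_split /= big_distrr /=; apply: leq_sum => j _.
case: (posnP (F i)) => [-> //|Fi]; case: (posnP (F j)) => [->|Fj]; first by rewrite muln0.
by rewrite mul1n muln1 nat_Cauchy.
Qed.

Lemma sum_nat_mem_card (I : finType) (A : {pred I}) : \sum_i (i \in A : nat) = #|A|.
Proof. by rewrite -sum1_card [RHS]big_mkcond; apply: eq_bigr => i _; case: (i \in A). Qed.

Lemma sum_bool_le1 (I : finType) (P : pred I) :
  {in P &, forall i j, i = j} -> \sum_i (P i : nat) <= 1.
Proof.
move=> P_uniq; rewrite (eq_bigr (fun i => (i \in P : nat))) // sum_nat_mem_card.
by apply/card_le1_eqP => i j Pi Pj; rewrite (P_uniq i j).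
Qed.

Lemma leq_pred_neq y k : y != k -> (y <= k.-1) = (y <= k).
Proof. by case: k => [//|k] yk /=; rewrite [RHS]leq_eqVlt (negbTE yk). Qed.

Lemma expn4_le_bin2 l : 1 < l -> l ^ 4 <= 16 * 'C(l, 2) ^ 2.
Proof.
move=> l_gt1; have bin2l : 2 * 'C(l, 2) = l * (l - 1) by rewrite mul_bin_left bin1 mulnC.
have -> : 16 * 'C(l, 2) ^ 2 = (l * (2 * (l - 1))) ^ 2.
  by rewrite mulnCA -bin2l; ring.
by rewrite -[4]/(2 * 2) expnM leq_sqr leq_mul2l; apply/orP; right; lia.
Qed.

Lemma divn_interior l a x : a * l < x < a * l + l -> x %/ l = a.
Proof.
case/andP=> ax xa; have l_gt0 : 0 < l by lia.
by rewrite -(subnKC (ltnW ax)) divnMDl // divn_small ?addn0 //; lia.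
Qed.

Lemma expn_count_drops K (m : nat -> nat) j : (forall a, m a.+1 <= m a) ->
  K ^ (\sum_(a < j) (K * m a.+1 < m a : nat)) * m j <= m 0.
Proof.
move=> m_decr; elim: j => [|j IH]; first by rewrite big_ord0 mul1n.
rewrite big_ord_recr /= expnD -mulnA; apply: leq_trans IH; rewrite leq_mul2l.
by case: ltnP => [/ltnW drop|_] /=; rewrite ?expn1 ?expn0 ?mul1n ?drop ?m_decr orbT.
Qed.

(* A round seen on the profile [N y] = number of cups of fill at least [y]. *)
Definition count_move (l x q : nat) (N N' : nat -> nat) : Prop :=
  [/\ 0 < q, 2 * q + N x.+1 <= N x, N' x.+1 = N x.+1 + q,
      N' x = (if l %| x then N x else N x - q)
    & forall y, y != x -> y != x.+1 -> N' y = N y].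

Definition interior_drop (l b : nat) (N N' : nat -> nat) :=
  \sum_(b.+1 <= y < b + l) (N y - N' y).

Definition interval_weight (l b : nat) (f : nat -> nat) :=
  \sum_(b.+1 <= y < (b + l).+1) (y - b.+1) * f y.

Definition interval_mass (l b : nat) (f : nat -> nat) :=
  \sum_(b.+1 <= y < (b + l).+1) f y.

Definition interval_energy (l b : nat) (f : nat -> nat) :=
  \sum_(b.+1 <= y < (b + l).+1) f y ^ 2.

Lemma interval_weight_ge l b f B :
  (forall y, y <= b + l -> B <= f y) -> B * 'C(l, 2) <= interval_weight l b f.
Proof.
move=> fB; rewrite -bin2_sum big_distrr /interval_weight -{1}[b.+1]add0n big_addn.
rewrite subSS addKn; apply: leq_sum_nat => i /andP[_ il].
by rewrite addnK /= mulnC leq_mul2l fB ?orbT //; lia.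
Qed.

Lemma interval_mass_le l b f A :
  (forall y, b < y -> f y <= A) -> interval_mass l b f <= l * A.
Proof.
move=> fA; have -> : l * A = \sum_(b.+1 <= y < (b + l).+1) A.
  by rewrite sum_nat_const_nat subSS addKn.
by apply: leq_sum_nat => y /andP[b_lt_y _]; apply: fA.
Qed.

Lemma not_dvdn_interior l b y : l %| b -> b < y < b + l -> ~~ (l %| y).
Proof.
move=> lb /andP[b_lt_y y_lt]; apply/negP => ly.
have := dvdn_leq _ (dvdn_sub ly lb); lia.
Qed.

Section CountMove.

Variables (l x q : nat) (N N' : nat -> nat).
Hypothesis mv : count_move l x q N N'.

Lemma count_move_ge y : y != x -> N y <= N' y.
Proof.
case: mv => _ _ Nx1 _ Nother yx; case: (eqVneq y x.+1) => [->|yx1].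
  by rewrite Nx1 leq_addr.
by rewrite Nother.
Qed.

Lemma count_move_le y : y != x.+1 -> N' y <= N y.
Proof.
case: mv => _ _ _ Nx Nother yx1; case: (eqVneq y x) => [->|yx].
  by rewrite Nx; case: ifP => // _; rewrite leq_subr.
by rewrite Nother.
Qed.

Lemma count_move_ckpt y : l %| y -> N y <= N' y.
Proof.
move=> ly; case: (eqVneq y x) => [yx|]; last exact: count_move_ge.
by case: mv => _ _ _ Nx _; rewrite yx Nx -yx ly.
Qed.

Variable b : nat.

Lemma interior_drop_move : l %| b ->
  interior_drop l b N N' = if b < x < b + l then q else 0.
Proof.
move=> lb; have drop0 y : y != x -> N y - N' y = 0.
  by move/count_move_ge; rewrite -subn_eq0 => /eqP.
case: ifP => x_in; last first.
  rewrite /interior_drop big_seq big1 // => y; rewrite mem_index_iota => y_in.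
  by apply: drop0; apply: contraFneq x_in => <-.
case: mv => _ room _ Nx _.
have := @sum_nat_update (fun y => N y - N' y) (fun _ => 0) _ _ _ x_in (fun y _ => drop0 y).
rewrite /interior_drop big1_eq Nx (negbTE (not_dvdn_interior lb x_in)); lia.
Qed.

Lemma interval_move_interior : l %| b -> b < x < b + l ->
  [/\ interval_weight l b N' = interval_weight l b N + q,
      interval_mass l b N' = interval_mass l b N
    & interval_energy l b N' + 2 * q ^ 2 <= interval_energy l b N].
Proof.
move=> lb x_in; case: mv => q_gt0 room Nx1 Nx Nother.
rewrite (negbTE (not_dvdn_interior lb x_in)) in Nx.
have x_rng : b.+1 <= x < (b + l).+1 by lia.
have x1_rng : b.+1 <= x.+1 < (b + l).+1 by lia.
have xx1 : x != x.+1 by rewrite neq_ltn ltnSn.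
have upd (g : nat -> nat -> nat) :=
  @sum_nat_update2 (fun y => g y (N' y)) (fun y => g y (N y)) _ _ _ _ x_rng x1_rng xx1
    (fun y _ yx yx1 => congr1 (g y) (Nother y yx yx1)).
have := upd (fun y v => (y - b.+1) * v); have := upd (fun _ v => v);
have := upd (fun _ v => v ^ 2).
rewrite /interval_weight /interval_mass /interval_energy /= Nx1 Nx.
have -> : x.+1 - b.+1 = (x - b.+1).+1 by lia.
move: (x - b.+1) (N x.+1) room => w u room.
have [r ->] : exists r, N x = u + 2 * q + r by exists (N x - u - 2 * q); lia.
have -> : u + 2 * q + r - q = u + q + r by lia.
rewrite !sqrnD; split; nia.
Qed.

Lemma interval_move_floor : 0 < l -> x = b ->
  [/\ interval_weight l b N' = interval_weight l b N,
      interval_mass l b N' = interval_mass l b N + q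
    & interval_energy l b N' <= interval_energy l b N + 2 * q * N b].
Proof.
move=> l_gt0 xb; case: mv => q_gt0 room Nx1 _ Nother; rewrite -xb.
have x1_rng : x.+1 <= x.+1 < (x + l).+1 by lia.
have upd (g : nat -> nat -> nat) :=
  @sum_nat_update (fun y => g y (N' y)) (fun y => g y (N y)) _ _ _ x1_rng
    (fun y y_rng yx1 => congr1 (g y) (Nother y (negbT (gtn_eqF (proj1 (andP y_rng)))) yx1)).
have := upd (fun y v => (y - x.+1) * v); have := upd (fun _ v => v);
have := upd (fun _ v => v ^ 2).
rewrite /interval_weight /interval_mass /interval_energy /= Nx1 subnn !mul0n sqrnD.
have := leq_mul (leqnn q) room; move: (N x.+1) => u room'; split; lia.
Qed.

Lemma interval_move_outside : l %| b -> x != b -> ~~ (b < x < b + l) ->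
  [/\ interval_weight l b N' = interval_weight l b N,
      interval_mass l b N' = interval_mass l b N
    & interval_energy l b N' = interval_energy l b N].
Proof.
move=> lb xb x_out; case: mv => _ _ _ Nx Nother.
have same y : b.+1 <= y < (b + l).+1 -> N' y = N y.
  case: (eqVneq y x) => [-> x_rng|yx y_rng].
    have xbl : x = b + l by lia.
    by rewrite Nx {1}xbl (dvdn_addr _ lb) dvdnn.
  by apply: Nother => //; apply/eqP => yx1; lia.
by split; apply: eq_big_nat => y /same ->.
Qed.

Lemma interval_move A : 0 < l -> l %| b -> N b <= A ->
  interval_weight l b N' = interval_weight l b N + interior_drop l b N N' /\
  interval_energy l b N' + 2 * interior_drop l b N N' ^ 2 + 2 * A * interval_mass l b N
    <= interval_energy l b N + 2 * A * interval_mass l b N'.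
Proof.
move=> l_gt0 lb NbA; rewrite interior_drop_move //; case: ifP => x_in.
  by case: (interval_move_interior lb x_in) => -> -> ?; split; lia.
case: (eqVneq x b) => [xb|xb].
  case: (interval_move_floor l_gt0 xb) => -> -> ?; split; first lia.
  by rewrite mulnDr; nia.
have := interval_move_outside lb xb (negbT x_in); case=> -> -> ->; split; lia.
Qed.

End CountMove.

Section CountPlay.

Variables (l T : nat) (N : nat -> nat -> nat).
Hypothesis N_move : forall t, t < T -> exists x q, count_move l x q (N t) (N t.+1).
Hypothesis N_decr : forall t y, N t y.+1 <= N t y.
Hypothesis N_init : forall y, 0 < y -> N 0 y = 0.

Lemma N_le t y z : y <= z -> N t z <= N t y.
Proof.
move=> yz; rewrite -(subnKC yz); elim: (z - y) => [|d IH]; first by rewrite addn0.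
by rewrite addnS (leq_trans (N_decr _ _)).
Qed.

Lemma N_ckpt_le b t t' : l %| b -> t <= t' <= T -> N t b <= N t' b.
Proof.
move=> lb /andP[tt' t'T]; elim: t' tt' t'T => [|t' IH]; first by rewrite leqn0 => /eqP ->.
rewrite leq_eqVlt => /orP[/eqP <- //|tt'] t'T.
have [x [q mv]] := N_move t'T.
exact: leq_trans (IH tt' (ltnW t'T)) (count_move_ckpt mv lb).
Qed.

Lemma N_eq0_above t y : t <= T -> t < y -> N t y = 0.
Proof.
elim: t y => [|t IH] y tT ty; first exact: N_init.
have [x [q [q_gt0 room _ _ Nother]]] := N_move tT.
have xt : x <= t.
  rewrite leqNgt; apply/negP => tx.
  have := IH x (ltnW tT) tx; have := IH x.+1 (ltnW tT) (ltnW tx); lia.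
rewrite Nother ?IH //; [exact: ltnW | apply/eqP..]; lia.
Qed.

(* Raising cups to [y.+1] leaves at least as many behind at [y]: every level
   climbed above a checkpoint costs a cup. *)
Lemma N_staircase b t j : l %| b -> t <= T -> 0 < N t (b + j) -> N t (b + j) + j <= N t b.
Proof.
move=> lb; elim: t j => [|t IH] j tT Nj.
  by case: j Nj => [|j]; rewrite ?addn0 // N_init // addnS.
have [x [q mv]] := N_move tT; have Nb := count_move_ckpt mv lb.
case: j Nj => [|j] Nj; first by rewrite !addn0.
case: (eqVneq (b + j.+1) x.+1) => [e|ne].
  have ex : x = b + j by move: e; rewrite addnS => /succn_inj.
  case: mv => q_gt0 room Nx1 _ _.
  have Nbj : 0 < N t (b + j) by rewrite -ex; lia.
  have := IH j (ltnW tT) Nbj; rewrite e Nx1 -ex; lia.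
have le := count_move_le mv ne.
have := IH j.+1 (ltnW tT) (leq_trans Nj le); lia.
Qed.

Lemma interval_invariant b t : 0 < l -> l %| b -> t <= T ->
  interval_weight l b (N t) = \sum_(s < t) interior_drop l b (N s) (N s.+1) /\
  interval_energy l b (N t) + 2 * \sum_(s < t) interior_drop l b (N s) (N s.+1) ^ 2
    <= 2 * N T b * interval_mass l b (N t).
Proof.
move=> l_gt0 lb; elim: t => [|t IH] tT.
  have N0 y : b.+1 <= y < (b + l).+1 -> N 0 y = 0.
    by case/andP => b_lt_y _; apply: N_init; apply: leq_ltn_trans b_lt_y.
  rewrite !big_ord0 /interval_weight /interval_energy.
  rewrite (eq_big_nat _ _ (fun y y_rng => congr1 _ (N0 y y_rng))).
  rewrite (eq_big_nat _ _ (fun y y_rng => congr1 (expn^~ 2) (N0 y y_rng))).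
  by split; rewrite big1 // => y _; rewrite muln0.
have [x [q mv]] := N_move tT.
have [IHw IHe] := IH (ltnW tT).
have NbA : N t b <= N T b by apply: N_ckpt_le; rewrite // (ltnW tT) /=.
have [w e] := interval_move mv l_gt0 lb NbA.
rewrite !big_ord_recr /= w IHw; split => //.
by move: IHe e; set S := \sum_(s < t) _; lia.
Qed.

Lemma interval_rounds_bound b : 0 < l -> l %| b ->
  (N T (b + l) * 'C(l, 2)) ^ 2
    <= (\sum_(t < T) (0 < interior_drop l b (N t) (N t.+1) : nat)) * (l * N T b ^ 2).
Proof.
move=> l_gt0 lb; have [w e] := interval_invariant l_gt0 lb (leqnn T).
have weight_ge : N T (b + l) * 'C(l, 2) <= interval_weight l b (N T).
  by apply: interval_weight_ge => y; apply: N_le.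
have mass_le : interval_mass l b (N T) <= l * N T b.
  by apply: interval_mass_le => y /ltnW; apply: N_le.
have sqr_le : \sum_(t < T) interior_drop l b (N t) (N t.+1) ^ 2 <= l * N T b ^ 2.
  have := leq_mul (leqnn (2 * N T b)) mass_le; nia.
rewrite -leq_sqr w in weight_ge.
apply: leq_trans weight_ge (leq_trans (sqr_sum_le_support _ _) _).
by rewrite leq_mul2l sqr_le orbT.
Qed.

Lemma good_interval_rounds b K : 0 < l -> l %| b ->
  0 < N T (b + l) -> N T b <= K * N T (b + l) ->
  'C(l, 2) ^ 2 <= l * K ^ 2 * \sum_(t < T) (0 < interior_drop l b (N t) (N t.+1) : nat).
Proof.
move=> l_gt0 lb top_gt0 bot_le; have := interval_rounds_bound l_gt0 lb.
set B := N T (b + l); set R := \sum_(t < T) _ => bound.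
have B_gt0 : 0 < B ^ 2 by rewrite expn_gt0 top_gt0.
rewrite -(leq_pmul2l B_gt0); apply: leq_trans (_ : _ <= R * (l * (K * B) ^ 2)) _.
  rewrite -expnMn; apply: leq_trans bound _.
  by rewrite leq_mul2l leq_mul2l leq_sqr bot_le !orbT.
by rewrite expnMn; nia.
Qed.

Lemma sum_interior_drops_le1 t m : t < T ->
  \sum_(a < m) (0 < interior_drop l (a * l) (N t) (N t.+1) : nat) <= 1.
Proof.
move=> tT; have [x [q mv]] := N_move tT.
apply: sum_bool_le1 => a a'; rewrite !unfold_in /=.
rewrite !(interior_drop_move mv) ?dvdn_mull //.
case: ifP => // /divn_interior xa _; case: ifP => // /divn_interior xa' _.
by apply: val_inj; rewrite /= -xa -xa'.
Qed.

Lemma sum_interval_rounds_le m :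
  \sum_(a < m) \sum_(t < T) (0 < interior_drop l (a * l) (N t) (N t.+1) : nat) <= T.
Proof.
rewrite exchange_big /=; apply: leq_trans (_ : \sum_(t < T) 1 <= T).
  by apply: leq_sum => t _; apply: sum_interior_drops_le1.
by rewrite sum1_card card_ord.
Qed.

Lemma count_play_rounds_lb h K : 0 < l -> 0 < K ->
  N T 0 < K ^ h * (2 * h * l).+1 -> 0 < N T (4 * h * l) ->
  h * 'C(l, 2) ^ 2 <= l * K ^ 2 * T.
Proof.
move=> l_gt0 K_gt0 few_cups top_gt0.
pose m a := N T (a * l).
pose R a := \sum_(t < T) (0 < interior_drop l (a * l) (N t) (N t.+1) : nat).
pose bad a := K * m a.+1 < m a.
have m_decr a : m a.+1 <= m a by apply: N_le; rewrite mulSnr leq_addr.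
have m2h : (2 * h * l).+1 <= m (2 * h).
  have := @N_staircase (2 * h * l) T (2 * h * l) (dvdn_mull _ (dvdnn l)) (leqnn T).
  have -> : 2 * h * l + 2 * h * l = 4 * h * l by lia.
  by move/(_ top_gt0); rewrite /m; lia.
have few_bad : \sum_(a < 2 * h) (bad a : nat) < h.
  rewrite ltnNge; apply/negP => many_bad.
  have drops : K ^ (\sum_(a < 2 * h) (bad a : nat)) * m (2 * h) <= m 0.
    exact: expn_count_drops.
  have := leq_mul (leq_pexp2l K_gt0 many_bad) m2h.
  rewrite /m mul0n in drops few_cups *; lia.
have good_R a : a < 2 * h -> ~~ bad a -> 'C(l, 2) ^ 2 <= l * K ^ 2 * R a.
  move=> a2h not_bad; rewrite -leqNgt -/(m a) in not_bad.
  apply: good_interval_rounds; rewrite ?dvdn_mull // -mulSnr.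
    apply: leq_trans (leq_trans (ltn0Sn _) m2h) (N_le T _).
    by rewrite leq_mul2r a2h orbT.
  exact: not_bad.
have many_good : h <= \sum_(a < 2 * h) (~~ bad a : nat).
  have : \sum_(a < 2 * h) (bad a : nat) + \sum_(a < 2 * h) (~~ bad a : nat) = 2 * h.
    by rewrite -big_split /= -[2 * h in RHS]card_ord -sum1_card; apply: eq_bigr => a _; case: (bad a).
  lia.
apply: leq_trans (leq_mul many_good (leqnn _)) _; rewrite big_distrl /=.
apply: leq_trans (_ : \sum_(a < 2 * h) l * K ^ 2 * R a <= _); last first.
  by rewrite -big_distrr leq_mul2l sum_interval_rounds_le orbT.
apply: leq_sum => a _; case: (boolP (bad a)) => [_|not_bad]; first by rewrite mul0n.
by rewrite mul1n good_R.
Qed.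

End CountPlay.

Definition fill_count n (c : config n) (y : nat) := \sum_(i < n) (y <= c i : nat).

Section CupRound.

Variables (l n k' q : nat) (c c' : config n) (U D : {set 'I_n}).
Hypotheses (U_card : #|U| = q) (D_card : #|D| = q) (UD : [disjoint U & D]).
Hypothesis UD_fill : forall i, i \in U :|: D -> c i = k'.
Hypothesis c'_def : forall i, c' i =
  if i \in U then k'.+1 else if i \in D then (if l %| k' then k' else k'.-1) else c i.

Let U_fill i : i \in U -> c i = k'.
Proof. by move=> iU; apply: UD_fill; rewrite inE iU. Qed.

Let D_fill i : i \in D -> c i = k'.
Proof. by move=> iD; apply: UD_fill; rewrite inE iD orbT. Qed.

Let U_notD i : i \in U -> (i \in D) = false.
Proof. by move=> iU; apply: (disjointFr UD). Qed.

Lemma fill_count_room : 2 * q + fill_count c k'.+1 <= fill_count c k'.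
Proof.
rewrite mul2n -addnn -{1}U_card -D_card -!sum_nat_mem_card -!big_split.
apply: leq_sum => i _ /=; case: (boolP (i \in U)) => iU.
  by rewrite U_notD // U_fill // ltnn leqnn.
case: (boolP (i \in D)) => iD; first by rewrite D_fill // ltnn leqnn.
by case: (ltnP k' (c i)) => // /ltnW ->.
Qed.

Lemma fill_count_raised : fill_count c' k'.+1 = fill_count c k'.+1 + q.
Proof.
rewrite -U_card -sum_nat_mem_card -big_split; apply: eq_bigr => i _ /=.
rewrite c'_def; case: (boolP (i \in U)) => iU; first by rewrite U_fill // ltnn leqnn.
case: (boolP (i \in D)) => iD; last by rewrite addn0.
by rewrite D_fill // ltnn addn0; case: ifP => _; rewrite ?ltnn // ltnNge leq_pred.
Qed.

Lemma fill_count_level :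
  fill_count c' k' = if l %| k' then fill_count c k' else fill_count c k' - q.
Proof.
case: ifP => lk.
  apply: eq_bigr => i _; rewrite c'_def lk.
  case: (boolP (i \in U)) => iU; first by rewrite U_fill // leqnSn leqnn.
  by case: (boolP (i \in D)) => iD //; rewrite D_fill.
have k'_gt0 : 0 < k' by rewrite lt0n; apply: contraFneq lk => ->; rewrite dvdn0.
suff <- : fill_count c' k' + q = fill_count c k' by rewrite addnK.
rewrite -D_card -sum_nat_mem_card -big_split; apply: eq_bigr => i _ /=; rewrite c'_def lk.
case: (boolP (i \in U)) => iU; first by rewrite U_notD // U_fill // leqnSn leqnn.
case: (boolP (i \in D)) => iD; last by rewrite addn0.
by rewrite D_fill // leqNgt ltn_predL k'_gt0 leqnn.
Qed.

Lemma fill_count_other y : y != k' -> y != k'.+1 -> fill_count c' y = fill_count c y.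
Proof.
move=> yk yk1; apply: eq_bigr => i _; rewrite c'_def.
case: (boolP (i \in U)) => iU; first by rewrite U_fill // -(leq_pred_neq yk1).
case: (boolP (i \in D)) => iD //; rewrite D_fill //.
by case: (l %| k'); rewrite ?leq_pred_neq.
Qed.

End CupRound.

Lemma cup_round_count_move l n (c c' : config n) : cup_round l c c' ->
  exists x q, count_move l x q (fill_count c) (fill_count c').
Proof.
case=> k' [q [U [D [q_gt0 [U_card [D_card [UD [UD_fill c'_def]]]]]]]].
exists k', q; split => //.
- exact: fill_count_room U_card D_card UD UD_fill.
- exact: fill_count_raised U_card UD_fill c'_def.
- exact: fill_count_level D_card UD UD_fill c'_def.
- move=> y; exact: (fill_count_other UD_fill c'_def).
Qed.

Lemma fill_count_decr n (c : config n) y : fill_count c y.+1 <= fill_count c y.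
Proof. by apply: leq_sum => i _; case: (ltnP y (c i)) => // /ltnW ->. Qed.

Lemma fill_count0 n (c : config n) : fill_count c 0 = n.
Proof. by rewrite /fill_count (eq_bigr (fun _ => 1)) // sum1_card card_ord. Qed.

Lemma fill_count_gt0 n (c : config n) i y : y <= c i -> 0 < fill_count c y.
Proof. by move=> yc; rewrite /fill_count (bigD1 i) //= yc. Qed.

Lemma fill_count_init (n y : nat) : 0 < y -> fill_count (@init_config n) y = 0.
Proof. by move=> y_gt0; rewrite /fill_count big1 // => i _; rewrite leqNgt y_gt0. Qed.

Lemma cup_play_rounds_lb l n T (s : nat -> config n) h K i :
  cup_play l T s -> 0 < l -> 0 < K -> n < K ^ h * (2 * h * l).+1 -> 4 * h * l <= s T i ->
  h * l ^ 3 <= 16 * K ^ 2 * T.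
Proof.
move=> [s0 rounds] l_gt0 K_gt0 few_cups top.
pose N t := fill_count (s t).
have N_move t : t < T -> exists x q, count_move l x q (N t) (N t.+1).
  by move=> tT; apply: cup_round_count_move; apply: rounds.
have N_init y : 0 < y -> N 0 y = 0 by rewrite /N s0; apply: fill_count_init.
have top_gt0 : 0 < N T (4 * h * l) by apply: fill_count_gt0 top.
have N_cups : N T 0 < K ^ h * (2 * h * l).+1 by rewrite /N fill_count0.
have lb := count_play_rounds_lb N_move (fun t => fill_count_decr (s t)) N_init
  l_gt0 K_gt0 N_cups top_gt0.
have front : 4 * h * l <= T.
  rewrite leqNgt; apply/negP => T_lt; move: top_gt0.
  by rewrite (N_eq0_above N_move N_init (leqnn T) T_lt).
case: (ltngtP l 1) => [|l_gt1|l1]; first lia.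
  rewrite -(leq_pmul2r l_gt0) -mulnA -expnSr.
  apply: leq_trans (leq_mul (leqnn h) (expn4_le_bin2 l_gt1)) _.
  apply: leq_trans (_ : 16 * (l * K ^ 2 * T) <= _); last by apply: eq_leq; ring.
  by rewrite mulnCA leq_mul2l lb orbT.
rewrite l1 in front *; apply: leq_trans (_ : 4 * h * 1 <= _); first lia.
by apply: leq_trans front _; rewrite leq_pmull // muln_gt0 expn_gt0 K_gt0.
Qed.

Lemma cup_play_rounds_lb_div n k h K T (s : nat -> config n) i :
  cup_play (k %/ h) T s -> 0 < h <= k -> 0 < K -> n + k <= k * K ^ h -> 4 * k <= s T i ->
  h * (k %/ h) ^ 3 <= 16 * K ^ 2 * T.
Proof.
set l := k %/ h => play /andP[h_gt0 h_le_k] K_gt0 few_cups full.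
have l_gt0 : 0 < l by rewrite divn_gt0.
have k_le : k <= 2 * h * l.
  have := ltn_ceil k h_gt0; have := leq_pmull h l_gt0.
  by rewrite -mulnA [h * l]mulnC mulSnr; lia.
apply: cup_play_rounds_lb play l_gt0 K_gt0 _ (_ : 4 * h * l <= _).
  have := leq_mul k_le (leqnn (K ^ h)).
  by rewrite mulnSr [K ^ h * _]mulnC; lia.
by apply: leq_trans full; rewrite -mulnA leq_mul2l [h * l]mulnC leq_divM.
Qed.

Lemma INR_expn a b : INR (a ^ b) = (INR a ^ b)%R.
Proof. by elim: b => [|b IH] //=; rewrite expnS mult_INR IH. Qed.

Lemma exp_le (x y : R) : (x <= y)%R -> (exp x <= exp y)%R.
Proof. by case/Rle_lt_or_eq_dec => [/exp_increasing/Rlt_le|->] //; apply: Rle_refl. Qed.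

Lemma add_le_mul_expn_of_ln (alpha : R) (n k h K : nat) :
  (0 < alpha)%R -> (exp (/ alpha) <= INR K)%R -> 0 < k ->
  (alpha * ln (INR n / INR k + 1) <= INR h)%R -> n + k <= k * K ^ h.
Proof.
move=> alpha_gt0 K_ge k_gt0 ln_le.
have k_pos : (0 < INR k)%R by apply: lt_0_INR; apply/ltP.
have ratio_pos : (0 < INR n / INR k + 1)%R.
  have := Rmult_le_pos _ _ (pos_INR n) (Rlt_le _ _ (Rinv_0_lt_compat _ k_pos)); lra.
have ln_le' : (ln (INR n / INR k + 1) <= INR h * / alpha)%R.
  apply: (Rmult_le_reg_l alpha) => //.
  by rewrite -Rmult_assoc Rmult_inv_r_id_m //; lra.
have ratio_le : (INR n / INR k + 1 <= INR K ^ h)%R.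
  rewrite -(exp_ln _ ratio_pos); apply: Rle_trans (exp_le ln_le') _.
  rewrite -{1}(ln_exp (/ alpha)) -/(Rpower (exp (/ alpha)) (INR h)) Rpower_pow; last exact: exp_pos.
  by apply: pow_incr; split; [apply: Rlt_le; apply: exp_pos | exact: K_ge].
apply/leP/INR_le; rewrite plus_INR mult_INR INR_expn.
apply: Rle_trans (Rmult_le_compat_l _ _ _ (Rlt_le _ _ k_pos) ratio_le).
rewrite Rmult_plus_distr_l Rmult_div_assoc /Rdiv Rmult_inv_r_id_m; lra.
Qed.

Theorem theorem6p6 :
  forall alpha beta : R, (0 < alpha)%R -> (alpha <= beta)%R ->
  exists c : R, (0 < c)%R /\
    forall (n k h T : nat) (s : nat -> 'I_n -> nat),
      1 <= k -> k <= n ->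
      (alpha * ln (INR n / INR k + 1) <= INR h)%R ->
      (INR h <= beta * ln (INR n / INR k + 1))%R ->
      2 <= h -> h <= k ->
      cup_play (k %/ h) T s ->
      (exists i : 'I_n, 4 * k <= s T i) ->
      (c * INR h * INR (k %/ h) ^ 3 <= INR T)%R.
Proof.
move=> alpha beta alpha_gt0 _.
have [K K_gt] := INR_unbounded (exp (/ alpha)).
have K_pos : (0 < 16 * INR K ^ 2)%R.
  have := exp_pos (/ alpha); have := pow_lt (INR K) 2; nra.
have K_gt0 : 0 < K by case: K K_gt {K_pos} => [|//] /=; have := exp_pos (/ alpha); lra.
exists (/ (16 * INR K ^ 2))%R; split; first exact: Rinv_0_lt_compat.
move=> n k h T s k_gt0 _ ln_le _ h_ge2 h_le_k play [i full].
have h_rng : 0 < h <= k by rewrite h_le_k andbT; lia.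
have few_cups := add_le_mul_expn_of_ln alpha_gt0 (Rlt_le _ _ K_gt) k_gt0 ln_le.
have /leP/le_INR := cup_play_rounds_lb_div play h_rng K_gt0 few_cups full.
rewrite mult_INR INR_expn mult_INR mult_INR INR_expn (_ : INR 16 = 16%R); last by simpl; lra.
move=> bound; rewrite Rmult_assoc; apply: (Rmult_le_reg_l _ _ _ K_pos).
rewrite -Rmult_assoc Rinv_r; lra.
Qed.
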